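(* Let $\mathcal{N}=\{1,\dots,N\}$, $G$ a positive integer, $D>0$, and for each $n\in\mathcal{N}$ let $\rho_n>0$, $E_n>0$, $C_n\in\mathbb{R}$, $p\in\mathbb{R}$. Consider the game in which each client $n$ chooses $x_n\in[0,D]$ to minimize $F_n(\boldsymbol{x})=\rho_n\left(\frac{1}{\sqrt{G\sum_{n'\in\mathcal{N}}x_{n'}}}+\frac{1}{G}\right)+E_nx_n+C_n+p$. If $\frac{\rho_1}{E_1}<\frac{\rho_2}{E_2}<\cdots<\frac{\rho_N}{E_N}$, then this game has a unique Nash equilibrium.
   Context: The cost $F_n$ is $+\infty$ when $\sum_{n'}x_{n'}=0$. A Nash equilibrium is a profile $\boldsymbol{x}^*\in[0,D]^N$ such that for every $n$, $F_n(x_n^*,\boldsymbol{x}^*_{-n})\le F_n(x_n,\boldsymbol{x}^*_{-n})$ for all $x_n\in[0,D]$. *)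

From mathcomp Require Import all_boot all_order all_algebra.
From mathcomp Require Import all_reals ereal.
Set Implicit Arguments. Unset Strict Implicit. Unset Printing Implicit Defensive.
Import Order.TTheory GRing.Theory Num.Theory.
Local Open Scope ring_scope.

Definition cost (R : realType) (N G : nat) (rho E C : 'I_N -> R) (p : R)
    (x : {ffun 'I_N -> R}) (n : 'I_N) : \bar R :=
  let S := \sum_(m < N) x m in
  if S == 0 then +oo%E
  else (rho n * (1 / Num.sqrt (G%:R * S) + 1 / G%:R) + E n * x n + C n + p)%:E.

Definition upd (R : realType) (N : nat) (x : {ffun 'I_N -> R}) (n : 'I_N) (y : R)
  : {ffun 'I_N -> R} := [ffun m => if m == n then y else x m].

Definition is_NE (R : realType) (N G : nat) (D : R) (rho E C : 'I_N -> R) (p : R)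
    (x : {ffun 'I_N -> R}) : Prop :=
  (forall n, 0 <= x n <= D) /\
  forall n (y : R), 0 <= y <= D ->
    (cost G rho E C p x n <= cost G rho E C p (upd x n y) n)%E.

(* Fix the total o of the other clients. Up to a constant, the cost of client n is then
   f_n (o + x_n) with f_n s = rho_n / sqrt (G s) + E_n s, which decreases up to
   T_n = (rho_n / (2 E_n sqrt G))^(2/3) and increases afterwards. So x is an equilibrium iff,
   with S the total, x_n > 0 forces S <= T_n and x_n < D forces T_n <= S. The hypothesis makes
   T_n strictly increasing in n. Two such profiles have the same total: if S(y) < S(x), every
   client active in x has T_n >= S(x) > S(y), hence plays D in y, so S(x) <= S(y). They then
   agree at every n with T_n <> S, and at the (unique) remaining index by comparing totals.
   For existence, take the least j whose successors, all playing D, do not exceed T_j; clients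
   below j play 0, and j tops the total up to min (T_j, (N - j) D). *)

From mathcomp Require Import all_boot all_order all_algebra.
From mathcomp Require Import all_reals ereal.
From mathcomp Require Import ring lra.
Import Order.TTheory GRing.Theory Num.Theory.
Local Open Scope ring_scope.
Set Implicit Arguments.
Unset Strict Implicit.

Lemma exists_cube_root (R : rcfType) (c : R) : 0 < c -> exists2 t : R, 0 < t & t ^+ 3 = c.
Proof.
move=> c_gt0.
have : exists2 t, 0 <= t <= 1 + c & root ('X^3 - c%:P) t.
  apply: poly_ivt; first lra.
  have c_le_cube : 1 + c <= (1 + c) ^+ 3.
    by rewrite -{1}(expr1 (1 + c)) ler_eXn2l //; lra.
  by rewrite !hornerE expr0n /=; lra.
move=> [t /andP[t_ge0 _] /rootP].
rewrite !hornerE => /eqP; rewrite subr_eq0 => /eqP t3.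
exists t => //; rewrite lt_neqAle t_ge0 andbT; apply: contraTneq c_gt0 => t0.
by rewrite -t3 -t0 expr0n ltxx.
Qed.

Lemma mul_add_between_cubes (R : realDomainType) (u v : R) : 0 < u -> u < v ->
  2 * u ^+ 3 < u * v * (u + v) < 2 * v ^+ 3.
Proof.
move=> u_gt0 uv; have v_gt0 : 0 < v by apply: lt_trans uv.
apply/andP; split; rewrite -subr_gt0.
- have -> : u * v * (u + v) - 2 * u ^+ 3 = u * (v - u) * (v + 2 * u) by ring.
  by rewrite !mulr_gt0 ?subr_gt0 //; lra.
- have -> : 2 * v ^+ 3 - u * v * (u + v) = v * (v - u) * (2 * v + u) by ring.
  by rewrite !mulr_gt0 ?subr_gt0 //; lra.
Qed.

Definition reduced_cost (R : rcfType) (k r e s : R) := r * (1 / Num.sqrt (k * s)) + e * s.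

Section ReducedCost.
Variables (R : rcfType) (k e t : R).
Hypotheses (k_gt0 : 0 < k) (e_gt0 : 0 < e) (t_gt0 : 0 < t).

(* [t ^+ 2] is the stationary point of [f]: the derivative [e - r / (2 * sqrt (k * s ^ 3))]
   of [reduced_cost k r e] vanishes at [s] iff [r = 2 * e * sqrt k * (sqrt s) ^ 3]. *)
Let f := reduced_cost k (2 * e * Num.sqrt k * t ^+ 3) e.

Lemma reduced_cost_sqr_sub (u v : R) : 0 < u -> 0 < v ->
  f (v ^+ 2) - f (u ^+ 2) = e * (u - v) * (2 * t ^+ 3 - u * v * (u + v)) / (u * v).
Proof.
move=> u_gt0 v_gt0; have sk_gt0 : 0 < Num.sqrt k by rewrite sqrtr_gt0.
have sqrt_k_sqr s : 0 < s -> Num.sqrt (k * s ^+ 2) = Num.sqrt k * s.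
  by move=> s_gt0; rewrite sqrtrM ?sqrtr_sqr ?gtr0_norm // ltW.
rewrite /f /reduced_cost !sqrt_k_sqr //.
by field; rewrite !gt_eqF.
Qed.

Lemma reduced_cost_decreasing (a b : R) : 0 < a -> a < b -> b <= t ^+ 2 -> f b < f a.
Proof.
move=> a_gt0 ab bt; have b_gt0 : 0 < b by lra.
rewrite -subr_lt0 -(sqr_sqrtr (ltW a_gt0)) -(sqr_sqrtr (ltW b_gt0)).
rewrite reduced_cost_sqr_sub ?sqrtr_gt0 //.
have [u_gt0 uv] : 0 < Num.sqrt a /\ Num.sqrt a < Num.sqrt b by rewrite sqrtr_gt0 ltr_sqrt.
have vt : Num.sqrt b <= t by rewrite -[t]gtr0_norm // -sqrtr_sqr ler_sqrt ?sqr_ge0.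
have v3t3 : Num.sqrt b ^+ 3 <= t ^+ 3 by apply: lerXn2r; rewrite // nnegrE ?sqrtr_ge0 ?ltW.
have /andP[_ w_lt] := mul_add_between_cubes u_gt0 uv.
have v_gt0 := lt_trans u_gt0 uv.
rewrite pmulr_llt0 ?invr_gt0 ?(mulr_gt0 u_gt0 v_gt0) // -mulrA pmulr_rlt0 //.
by rewrite nmulr_rlt0 ?subr_lt0 ?subr_gt0 //; lra.
Qed.

Lemma reduced_cost_increasing (a b : R) : t ^+ 2 <= a -> a < b -> f a < f b.
Proof.
move=> ta ab; have a_gt0 : 0 < a by apply: lt_le_trans ta; rewrite exprn_gt0.
have b_gt0 : 0 < b by lra.
rewrite -subr_gt0 -(sqr_sqrtr (ltW a_gt0)) -(sqr_sqrtr (ltW b_gt0)).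
rewrite reduced_cost_sqr_sub ?sqrtr_gt0 //.
have [u_gt0 uv] : 0 < Num.sqrt a /\ Num.sqrt a < Num.sqrt b by rewrite sqrtr_gt0 ltr_sqrt.
have tu : t <= Num.sqrt a by rewrite -[t]gtr0_norm // -sqrtr_sqr ler_sqrt // ltW.
have t3u3 : t ^+ 3 <= Num.sqrt a ^+ 3 by apply: lerXn2r; rewrite // nnegrE ?sqrtr_ge0 ?ltW.
have /andP[w_gt _] := mul_add_between_cubes u_gt0 uv.
have v_gt0 := lt_trans u_gt0 uv.
rewrite pmulr_lgt0 ?invr_gt0 ?(mulr_gt0 u_gt0 v_gt0) // -mulrA pmulr_rgt0 //.
by rewrite nmulr_rgt0 ?subr_lt0 //; lra.
Qed.
End ReducedCost.

Section Unimodal.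
Variables (R : realDomainType) (f : R -> R) (T : R).
Hypothesis f_decreasing : forall a b, 0 < a -> a < b -> b <= T -> f b < f a.
Hypothesis f_increasing : forall a b, T <= a -> a < b -> f a < f b.

Lemma unimodal_le_left a b : 0 < a -> a <= b -> b <= T -> f b <= f a.
Proof.
move=> a_gt0; rewrite le_eqVlt => /orP[/eqP -> //|ab bT].
exact/ltW/f_decreasing.
Qed.

Lemma unimodal_le_right a b : T <= a -> a <= b -> f a <= f b.
Proof.
move=> Ta; rewrite le_eqVlt => /orP[/eqP -> //|ab].
exact/ltW/f_increasing.
Qed.

Lemma unimodal_min s : 0 < s -> f T <= f s.
Proof.
move=> s_gt0; have [sT|Ts] := leP s T.
- exact: unimodal_le_left.
- exact/ltW/f_increasing.
Qed.

Lemma best_response_threshold (o x D : R) :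
  0 < T -> 0 <= o -> 0 <= x <= D -> 0 < o + x ->
  (forall y, 0 <= y <= D -> 0 < o + y -> f (o + x) <= f (o + y)) <->
  (0 < x -> o + x <= T) /\ (x < D -> T <= o + x).
Proof.
move=> T_gt0 o_ge0 /andP[x_ge0 xD] s_gt0.
split=> [best|[x_gt0_le x_ltD_ge] y /andP[y_ge0 yD] t_gt0].
  have deviate (y : R) : 0 <= y -> y <= D -> 0 < o + y -> ~ f (o + y) < f (o + x).
    by move=> y_ge0 yD t_gt0; apply/negP; rewrite -leNgt best ?y_ge0.
  split=> [x_gt0|x_ltD]; rewrite leNgt; apply/negP => sT.
  - have [To|oT] := leP T o.
    + apply: (deviate 0); rewrite ?addr0; try lra.
      by apply: f_increasing; lra.
    + apply: (deviate (T - o)); rewrite ?subrKC; try lra.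
      by apply: f_increasing; lra.
  - have [oDT|Tle] := leP (o + D) T.
    + by apply: (deviate D); try apply: f_decreasing; lra.
    + apply: (deviate (T - o)); rewrite ?subrKC; try lra.
      by apply: f_decreasing; lra.
have [sT|Ts|->] := ltgtP (o + x) T.
- have xD' : x = D by apply/le_anti; rewrite xD leNgt; apply/negP => /x_ltD_ge; lra.
  by apply: unimodal_le_left; lra.
- have x0 : x = 0 by apply/le_anti; rewrite x_ge0 leNgt andbT; apply/negP => /x_gt0_le; lra.
  by apply: unimodal_le_right; lra.
- exact: unimodal_min.
Qed.
End Unimodal.

Lemma sum_step (R : nmodType) (M j : nat) (D v : R) : (j < M)%N ->
  \sum_(m < M) (if (m < j)%N then 0 else if m == j :> nat then v else D) = v + D *+ (M - j.+1).
Proof.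
elim: M => [//|M IH] j_lt; rewrite big_ord_recr /=.
have [j_ltM|j_gtM|<-] := ltngtP j M.
- by rewrite IH // subSS -(subnSK j_ltM) mulrS (addrC D) addrA.
- by move: j_lt; rewrite ltnS leqNgt j_gtM.
- by rewrite subnn addr0 big1 ?add0r // => i _; rewrite ltn_ord.
Qed.

Section ThresholdProfile.
Variables (R : realDomainType) (N : nat) (D : R) (T : 'I_N -> R).

Definition threshold_profile (x : {ffun 'I_N -> R}) :=
  [/\ forall n, 0 <= x n <= D, 0 < \sum_m x m,
      forall n, 0 < x n -> \sum_m x m <= T n
    & forall n, x n < D -> T n <= \sum_m x m].

Lemma threshold_profile_below x n :
  threshold_profile x -> T n < \sum_m x m -> x n = 0.
Proof.
case=> x_bnd _ x_pos _ Tlt; apply/le_anti; rewrite (andP (x_bnd n)).1 andbT.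
by rewrite leNgt; apply: contraL Tlt => /x_pos; rewrite leNgt.
Qed.

Lemma threshold_profile_above x n :
  threshold_profile x -> \sum_m x m < T n -> x n = D.
Proof.
case=> x_bnd _ _ x_ltD ltT; apply/le_anti; rewrite (andP (x_bnd n)).2 /=.
by rewrite leNgt; apply: contraL ltT => /x_ltD; rewrite leNgt.
Qed.

Lemma threshold_profile_sum_le x y :
  threshold_profile x -> threshold_profile y -> \sum_m x m <= \sum_m y m.
Proof.
move=> tx ty; rewrite leNgt; apply/negP => lt_yx.
suff : \sum_m x m <= \sum_m y m by rewrite leNgt lt_yx.
have [x_bnd _ x_pos _] := tx; have [y_bnd _ _ _] := ty.
apply: ler_sum => m _; have [x_gt0|x_le0] := ltP 0 (x m).
- rewrite (threshold_profile_above ty) ?(andP (x_bnd m)).2 //.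
  exact: lt_le_trans lt_yx (x_pos m x_gt0).
- exact: le_trans x_le0 (andP (y_bnd m)).1.
Qed.

Lemma threshold_profile_uniq x y : injective T ->
  threshold_profile x -> threshold_profile y -> x = y.
Proof.
move=> T_inj tx ty.
have sum_xy : \sum_m x m = \sum_m y m.
  by apply/le_anti; rewrite !threshold_profile_sum_le.
have off m : T m != \sum_k x k -> x m = y m.
  move=> /lt_total/orP[Tlt|ltT].
  - by rewrite !threshold_profile_below // -sum_xy.
  - by rewrite !threshold_profile_above // -sum_xy.
apply/ffunP => m; have [Tm_eq|] := eqVneq (T m) (\sum_k x k); last exact: off.
move: sum_xy; rewrite (bigD1 m) //= [in RHS](bigD1 m) //=.
rewrite (eq_bigr y) => [/addIr //|k km]; apply: off.
by rewrite -Tm_eq; apply: contra km => /eqP/T_inj ->.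
Qed.

Definition above_total (j : 'I_N) := D *+ (N - j.+1).

Definition step_profile (j : 'I_N) (v : R) : {ffun 'I_N -> R} :=
  [ffun m : 'I_N => if (m < j)%N then 0 else if m == j then v else D].

Lemma sum_step_profile j v : \sum_m step_profile j v m = v + above_total j.
Proof.
rewrite /above_total -(sum_step D v (ltn_ord j)).
by apply: eq_bigr => m _; rewrite ffunE.
Qed.

Lemma step_profile_threshold j (v : R) : 0 <= v <= D -> 0 < v + above_total j ->
  (0 < v -> v + above_total j <= T j) -> (v < D -> T j <= v + above_total j) ->
  (forall m : 'I_N, (m < j)%N -> T m <= v + above_total j) ->
  (forall m : 'I_N, (j < m)%N -> v + above_total j <= T m) ->
  threshold_profile (step_profile j v).
Proof.
move=> /andP[v_ge0 vD] s_gt0 v_pos v_ltD below above.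
have D_ge0 : 0 <= D := le_trans v_ge0 vD.
split; rewrite ?sum_step_profile // => m; rewrite ffunE.
- by case: ifP => _; [|case: ifP => _]; rewrite ?lexx ?D_ge0 ?v_ge0 ?vD.
- case: ifPn => [_|]; first by rewrite ltxx.
  case: eqP => [-> //|/eqP m_neq_j]; rewrite -leqNgt => j_le_m _.
  by apply: above; rewrite ltn_neqAle j_le_m andbT eq_sym.
- case: ifP => [m_lt_j _|_]; first exact: below.
  by case: eqP => [-> //|_]; rewrite ltxx.
Qed.

Lemma threshold_profile_exists : (0 < N)%N -> 0 < D -> (forall n, 0 < T n) ->
  (forall i j : 'I_N, (i < j)%N -> T i < T j) -> exists x, threshold_profile x.
Proof.
move=> N_gt0 D_gt0 T_gt0 T_mono.
have T_le (i j : 'I_N) : (i <= j)%N -> T i <= T j.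
  by rewrite leq_eqVlt => /orP[/eqP/val_inj -> //|/T_mono/ltW].
have top_lt : (N.-1 < N)%N by rewrite ltn_predL.
pose top : 'I_N := Ordinal top_lt.
have top_ok : above_total top <= T top.
  by rewrite /above_total /= prednK // subnn mulr0n ltW.
have [j j_ok j_min] := @arg_minnP _ top (fun j => above_total j <= T j) val top_ok.
have above_j_ge0 : 0 <= above_total j by rewrite mulrn_wge0 ?ltW.
have Tj_gt0 := T_gt0 j.
have [Tj_le|lt_Tj] := leP (T j) (above_total j + D).
- exists (step_profile j (T j - above_total j)).
  apply: step_profile_threshold; rewrite ?subrK //; try lra.
  + by move=> m /T_mono /ltW.
  + by move=> m /T_mono /ltW.
- exists (step_profile j D); apply: step_profile_threshold; rewrite ?lexx ?ltxx //; try lra.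
  + move=> m m_lt_j; have j_gt0 : (0 < j)%N by apply: leq_ltn_trans m_lt_j.
    pose k : 'I_N := Ordinal (leq_ltn_trans (leq_pred j) (ltn_ord j)).
    have above_k : above_total k = above_total j + D.
      by rewrite /above_total /= prednK // -mulrSr subnSK.
    have Tk_lt : T k < above_total k.
      by rewrite ltNge; apply/negP => /j_min; rewrite /= leqNgt ltn_predL j_gt0.
    have : T m <= T k by apply: T_le; rewrite /= -ltnS prednK.
    lra.
  + by move=> m /T_mono; lra.
Qed.
End ThresholdProfile.

Lemma sum_upd (R : realType) (N : nat) (x : {ffun 'I_N -> R}) n y :
  \sum_m upd x n y m = \sum_m x m - x n + y.
Proof.
rewrite (bigD1 n) //= [in RHS](bigD1 n) //= ffunE eqxx.
rewrite (eq_bigr x) => [|m /negbTE m_neq_n]; last by rewrite ffunE m_neq_n.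
by rewrite [x n + _]addrC addrK addrC.
Qed.

Lemma sum_others_ge0 (R : numDomainType) (N : nat) (x : {ffun 'I_N -> R}) n :
  (forall m, 0 <= x m) -> 0 <= \sum_m x m - x n.
Proof. by move=> x_ge0; rewrite (bigD1 n) //= addrAC subrr add0r sumr_ge0. Qed.

Section Game.
Variables (R : realType) (N G : nat) (D p : R) (rho E C tau : 'I_N -> R).
Hypotheses (G_gt0 : (0 < G)%N) (E_gt0 : forall n, 0 < E n) (tau_gt0 : forall n, 0 < tau n).
Hypothesis rho_tau : forall n, rho n = 2 * E n * Num.sqrt G%:R * tau n ^+ 3.

Lemma cost_upd_le (x : {ffun 'I_N -> R}) n y :
  0 < \sum_m x m -> 0 < \sum_m x m - x n + y ->
  (cost G rho E C p x n <= cost G rho E C p (upd x n y) n)%E =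
  (reduced_cost G%:R (rho n) (E n) (\sum_m x m) <=
   reduced_cost G%:R (rho n) (E n) (\sum_m x m - x n + y)).
Proof.
move=> s_gt0 t_gt0; rewrite /cost sum_upd !gt_eqF // lee_fin ffunE eqxx /reduced_cost.
by apply/idP/idP => ?; lra.
Qed.

Lemma best_response_iff (x : {ffun 'I_N -> R}) n :
  (forall m, 0 <= x m <= D) -> 0 < \sum_m x m ->
  (forall y, 0 <= y <= D -> (cost G rho E C p x n <= cost G rho E C p (upd x n y) n)%E) <->
  (0 < x n -> \sum_m x m <= tau n ^+ 2) /\ (x n < D -> tau n ^+ 2 <= \sum_m x m).
Proof.
move=> x_bnd s_gt0.
have G_pos : 0 < G%:R :> R by rewrite ltr0n.
have o_ge0 : 0 <= \sum_m x m - x n.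
  by apply: sum_others_ge0 => m; case/andP: (x_bnd m).
have decr := reduced_cost_decreasing G_pos (E_gt0 n) (tau_gt0 n).
have incr := reduced_cost_increasing G_pos (E_gt0 n) (tau_gt0 n).
rewrite -rho_tau in decr incr.
have := best_response_threshold decr incr (exprn_gt0 2 (tau_gt0 n)) o_ge0 (x_bnd n).
rewrite subrK => /(_ s_gt0) <-; split=> best y y_bnd.
- by move=> t_gt0; rewrite -cost_upd_le ?best.
- have [t_eq0|t_neq0] := eqVneq (\sum_m x m - x n + y) 0.
    by rewrite {2}/cost sum_upd t_eq0 eqxx leey.
  have t_gt0 : 0 < \sum_m x m - x n + y.
    by rewrite lt_neqAle eq_sym t_neq0 addr_ge0 // (andP y_bnd).1.
  by rewrite cost_upd_le ?best.
Qed.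

Lemma is_NE_sum_gt0 (n0 : 'I_N) x : 0 < D -> is_NE G D rho E C p x -> 0 < \sum_m x m.
Proof.
move=> D_gt0 [x_bnd ne]; have x_ge0 m : 0 <= x m by case/andP: (x_bnd m).
rewrite lt_neqAle sumr_ge0 // andbT eq_sym; apply/eqP => s_eq0.
have := sum_others_ge0 n0 x_ge0; rewrite s_eq0 => o_ge0.
have := ne n0 D; rewrite lexx ltW //= => /(_ isT).
by rewrite /cost sum_upd s_eq0 eqxx gt_eqF ?leye_eq //; lra.
Qed.

Lemma is_NE_threshold_profile (n0 : 'I_N) x : 0 < D ->
  is_NE G D rho E C p x <-> threshold_profile D (fun n => tau n ^+ 2) x.
Proof.
move=> D_gt0; split=> [ne|[x_bnd s_gt0 lo hi]].
- have s_gt0 := is_NE_sum_gt0 n0 D_gt0 ne; case: ne => x_bnd ne.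
  have br n := (best_response_iff n x_bnd s_gt0).1 (ne n).
  by split=> // n; [exact: (br n).1|exact: (br n).2].
- by split=> // n; apply/(best_response_iff n x_bnd s_gt0); split; [exact: lo|exact: hi].
Qed.
End Game.

Theorem theorem2 (R : realType) (N G : nat) (D p : R) (rho E C : 'I_N -> R) :
  (0 < G)%N -> 0 < D ->
  (forall n, 0 < rho n) -> (forall n, 0 < E n) ->
  (forall i j : 'I_N, (i < j)%N -> rho i / E i < rho j / E j) ->
  exists x : {ffun 'I_N -> R},
    is_NE G D rho E C p x /\ forall y, is_NE G D rho E C p y -> y = x.
Proof.
move=> G_gt0 D_gt0 rho_gt0 E_gt0 ratio_mono.
have [N0|N_gt0] := posnP N.
  subst N; exists [ffun=> 0]; split=> [|y _]; last by apply/ffunP; case.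
  by split; case.
have sqrtG_gt0 : 0 < Num.sqrt G%:R :> R by rewrite sqrtr_gt0 ltr0n.
have /fin_all_exists2[tau tau_gt0 tau_cube] (n : 'I_N) :
    exists2 t : R, 0 < t & t ^+ 3 = rho n / E n / (2 * Num.sqrt G%:R).
  by apply: exists_cube_root; rewrite !divr_gt0 ?mulr_gt0.
have rho_tau n : rho n = 2 * E n * Num.sqrt G%:R * tau n ^+ 3.
  by rewrite tau_cube; field; rewrite !gt_eqF.
have T_mono (i j : 'I_N) : (i < j)%N -> tau i ^+ 2 < tau j ^+ 2.
  have c_gt0 : 0 < (2 * Num.sqrt G%:R)^-1 :> R by rewrite invr_gt0 mulr_gt0.
  move=> /ratio_mono; rewrite -(ltr_pM2r c_gt0) -!tau_cube.
  by rewrite !ltr_pXn2r ?nnegrE ?ltW.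
have T_inj : injective (fun n => tau n ^+ 2).
  move=> i j /= Tij; have [/T_mono|/T_mono|/val_inj //] := ltngtP i j.
  - by rewrite Tij ltxx.
  - by rewrite Tij ltxx.
have T_gt0 n : 0 < tau n ^+ 2 by rewrite exprn_gt0.
have [x tx] := threshold_profile_exists N_gt0 D_gt0 T_gt0 T_mono.
have NE_iff := is_NE_threshold_profile p C G_gt0 E_gt0 tau_gt0 rho_tau (Ordinal N_gt0) _ D_gt0.
exists x; split=> [|y /NE_iff ty]; first exact/NE_iff.
exact: threshold_profile_uniq T_inj ty tx.
Qed.
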